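(* Let $n\ge 2$ and let $k_1,\dots,k_n$, $a_1,\dots,a_{n-1}$, $b_1,\dots,b_n$ be real or complex numbers. Let $A_2$ be the $n\times n$ matrix with entries $$(A_2)_{ij}=\begin{cases} k_j b_j, & i\le j,\\ k_i a_j, & i>j.\end{cases}$$ Then $$\det(A_2)=k_nb_n\,(k_1b_1-k_2a_1)(k_2b_2-k_3a_2)\cdots(k_{n-1}b_{n-1}-k_na_{n-1}).$$ In particular, $A_2$ is singular if $k_n=0$, or $b_n=0$, or $k_ib_i-k_{i+1}a_i=0$ for some $i\in\{1,\dots,n-1\}$. *)

From mathcomp Require Import all_boot all_order all_algebra.
Set Implicit Arguments. Unset Strict Implicit. Unset Printing Implicit Defensive.
Import GRing.Theory.
Local Open Scope ring_scope.

(* Rows/columns of 'M_n are 0-based, so index i : 'I_n stands for i+1. *)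
Definition A2 (R : ringType) (n : nat) (k a b : nat -> R) : 'M[R]_n :=
  \matrix_(i < n, j < n)
    if (i <= j)%N then k j.+1 * b j.+1 else k i.+1 * a j.+1.

From mathcomp Require Import all_boot all_order all_algebra.
Import GRing.Theory.
Local Open Scope ring_scope.

(* Subtracting from every row the next one is a unimodular row operation.
   Above the diagonal the entries of A_2 depend only on the column, so this
   operation makes the matrix lower triangular, and the determinant is the
   product of the new diagonal entries k_i b_i - k_(i+1) a_i and k_n b_n. *)

Section ShiftMatrix.

Variables (R : comPzRingType) (n : nat).

Definition shift_mx : 'M[R]_n := \matrix_(i, j) ((j : nat) == i.+1)%:R.

Lemma sub_shift_mul_succ (A : 'M[R]_n) (i l j : 'I_n) :
  l = i.+1 :> nat -> (A - shift_mx *m A) i j = A i j - A l j.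
Proof.
move=> li; rewrite 3!mxE (bigD1 l) //= big1 ?addr0 => [|l' l'l].
  by rewrite mxE li eqxx mul1r.
by rewrite mxE -li val_eqE (negbTE l'l) mul0r.
Qed.

Lemma sub_shift_mul_last (A : 'M[R]_n) (i j : 'I_n) :
  (n <= i.+1)%N -> (A - shift_mx *m A) i j = A i j.
Proof.
move=> ni; rewrite 3!mxE big1 ?oppr0 ?addr0 // => l _.
by rewrite mxE ltn_eqF ?mul0r // (leq_trans (ltn_ord l)).
Qed.

Lemma det_1_sub_shift_mx : \det (1%:M - shift_mx) = 1.
Proof.
rewrite -det_tr det_trig.
  by apply: big1 => i _; rewrite !mxE eqxx eqn_leq ltnn andbF subr0.
apply/forallP => i; apply/forallP => j; apply/implyP => lij.
by rewrite !mxE -val_eqE /= gtn_eqF // ltn_eqF ?subrr // ltnW.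
Qed.

Lemma det_sub_shift_mul (A : 'M[R]_n) : \det (A - shift_mx *m A) = \det A.
Proof.
by rewrite -{1}[A]mul1mx -mulmxBl det_mulmx det_1_sub_shift_mx mul1r.
Qed.

Lemma det_upper_col_const (A : 'M[R]_n) :
  (forall i i' j : 'I_n, (i <= j)%N -> (i' <= j)%N -> A i j = A i' j) ->
  \det A = \prod_(i < n) (A - shift_mx *m A) i i.
Proof.
move=> colA; rewrite -det_sub_shift_mul det_trig //.
apply/forallP => i; apply/forallP => j; apply/implyP => lij.
pose l : 'I_n := Ordinal (leq_ltn_trans lij (ltn_ord j)).
by rewrite (@sub_shift_mul_succ _ _ l) // (colA i l j) ?(ltnW lij) ?subrr.
Qed.

End ShiftMatrix.

Theorem mainTheorem4 (R : comRingType) (n : nat) (k a b : nat -> R) :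
  (2 <= n)%N ->
  \det (A2 n k a b) =
    k n * b n * \prod_(1 <= i < n) (k i * b i - k i.+1 * a i).
Proof.
case: n k a b => [|m] // k a b _.
rewrite det_upper_col_const => [|i i' j ij i'j]; last by rewrite !mxE ij i'j.
rewrite big_ord_recr /= big_add1 /= big_mkord mulrC; congr (_ * _).
  by rewrite sub_shift_mul_last // !mxE leqnn.
apply: eq_bigr => i _.
pose l : 'I_m.+1 := Ordinal (ltn_ord i : i.+1 < m.+1)%N.
by rewrite (@sub_shift_mul_succ _ _ _ _ l) // !mxE /= leqnn ltnn.
Qed.
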